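(* If a second-order ODE $x_2=F(t,x,x_1)$ is invariant under a telescopic vector field $\tau^{(2)}=\alpha\partial_t+\beta\partial_x+\gamma^{(1)}\partial_{x_1}+\gamma^{(2)}\partial_{x_2}$, then $\mathbf{X}=\partial_x$ is a $\lambda$-symmetry of the equation for the function $\lambda=\lambda(t,x,x_1)$ given by $$\lambda=\frac{\gamma^{(1)}-\alpha F}{\beta-\alpha x_1}.$$
   Context: Jet coordinates $(t,x,x_1,x_2)$, $x_i=d^ix/dt^i$; $D_t$ the total derivative. A telescopic vector field of order 2 is $\tau^{(2)}=\alpha\partial_t+\beta\partial_x+\gamma^{(1)}\partial_{x_1}+\gamma^{(2)}\partial_{x_2}$ with $\alpha,\beta,\gamma^{(1)}$ smooth functions of $(t,x,x_1)$, $\beta-\alpha x_1\neq0$, and $\gamma^{(2)}=D_t(\gamma^{(1)})-D_t(\alpha)x_2+\frac{\gamma^{(1)}+x_1D_t\alpha-D_t\beta}{\beta-x_1\alpha}(\gamma^{(1)}-\alpha x_2)$; invariance means $\tau^{(2)}$ is tangent to $\{x_2=F\}$. For $\lambda=\lambda(t,x,x_1)$ and $\mathbf{X}=\rho(t,x)\partial_t+\phi^0(t,x)\partial_x$, $\mathbf{X}^{[\lambda,(2)]}=\rho\partial_t+\phi^0\partial_x+\phi^{[\lambda,(1)]}\partial_{x_1}+\phi^{[\lambda,(2)]}\partial_{x_2}$ with $\phi^{[\lambda,(0)]}=\phi^0$, $\phi^{[\lambda,(i)]}=D_t(\phi^{[\lambda,(i-1)]})-D_t(\rho)x_i+\lambda(\phi^{[\lambda,(i-1)]}-\rho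 x_i)$; $\mathbf{X}$ is a $\lambda$-symmetry of $x_2=F$ if $\mathbf{X}^{[\lambda,(2)]}$ is tangent to $\{x_2=F\}$. *)

From Stdlib Require Import Reals ClassicalEpsilon.
Open Scope R_scope.

(* Functions of the jet variables (t, x, x1). *)
Definition fn3 := R -> R -> R -> R.
Definition fn4 := R -> R -> R -> R -> R.

Definition deriv (g : R -> R) (s : R) : R :=
  epsilon (inhabits 0) (fun l => derivable_pt_lim g s l).

Definition pt  (f : fn3) : fn3 := fun t x y => deriv (fun s => f s x y) t.
Definition px  (f : fn3) : fn3 := fun t x y => deriv (fun s => f t s y) x.
Definition px1 (f : fn3) : fn3 := fun t x y => deriv (fun s => f t x s) y.

Definition has_partials (f : fn3) : Prop :=
  forall t x y,
    (exists l, derivable_pt_lim (fun s => f s x y) t l) /\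
    (exists l, derivable_pt_lim (fun s => f t s y) x l) /\
    (exists l, derivable_pt_lim (fun s => f t x s) y l).

(* Smooth (C^infinity) on R^3: all iterated partial derivatives of all orders exist. *)
Definition smooth3 (f : fn3) : Prop :=
  exists S : fn3 -> Prop, S f /\
    forall g, S g -> has_partials g /\ S (pt g) /\ S (px g) /\ S (px1 g).

Definition Dt (g : fn3) : fn4 :=
  fun t x x1 x2 => pt g t x x1 + x1 * px g t x x1 + x2 * px1 g t x x1.

Definition Dt0 (g : R -> R -> R) : fn3 :=
  fun t x x1 => pt (fun t x _ => g t x) t x x1 + x1 * px (fun t x _ => g t x) t x x1.

Definition lift3 (f : fn3) : fn4 := fun t x x1 _ => f t x x1.
Definition lift2 (f : R -> R -> R) : fn4 := fun t x _ _ => f t x.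

(* The vector field a d_t + b d_x + c1 d_{x1} + c2 d_{x2} is tangent to the
   submanifold {x2 = F(t,x,x1)}, i.e. it annihilates x2 - F on that submanifold. *)
Definition tangent_to_eq (F : fn3) (a b c1 c2 : fn4) : Prop :=
  forall t x x1,
    c2 t x x1 (F t x x1) =
      a t x x1 (F t x x1) * pt F t x x1 + b t x x1 (F t x x1) * px F t x x1
      + c1 t x x1 (F t x x1) * px1 F t x x1.

Definition telescopic_gamma2 (alpha beta gamma1 : fn3) : fn4 :=
  fun t x x1 x2 =>
    Dt gamma1 t x x1 x2 - Dt alpha t x x1 x2 * x2
    + (gamma1 t x x1 + x1 * Dt alpha t x x1 x2 - Dt beta t x x1 x2)
        / (beta t x x1 - x1 * alpha t x x1)
      * (gamma1 t x x1 - alpha t x x1 * x2).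

Definition telescopic_invariant (F alpha beta gamma1 : fn3) : Prop :=
  tangent_to_eq F (lift3 alpha) (lift3 beta) (lift3 gamma1)
    (telescopic_gamma2 alpha beta gamma1).

Definition lam_phi1 (lam : fn3) (rho phi0 : R -> R -> R) : fn3 :=
  fun t x x1 =>
    Dt0 phi0 t x x1 - Dt0 rho t x x1 * x1 + lam t x x1 * (phi0 t x - rho t x * x1).

Definition lam_phi2 (lam : fn3) (rho phi0 : R -> R -> R) : fn4 :=
  fun t x x1 x2 =>
    Dt (lam_phi1 lam rho phi0) t x x1 x2 - Dt0 rho t x x1 * x2
    + lam t x x1 * (lam_phi1 lam rho phi0 t x x1 - rho t x * x2).

Definition lambda_symmetry (F lam : fn3) (rho phi0 : R -> R -> R) : Prop :=
  tangent_to_eq F (lift2 rho) (lift2 phi0) (lift3 (lam_phi1 lam rho phi0))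
    (lam_phi2 lam rho phi0).

From Stdlib Require Import Reals ClassicalEpsilon FunctionalExtensionality.
Open Scope R_scope.

(* Proof of Corollary 2.6.  Put N = gamma1 - alpha F, Delta = beta - alpha x1 and
   lambda = N / Delta.  For X = d_x the lambda-prolongation is phi1 = lambda and
   phi2 = D_t lambda + lambda^2, so X is a lambda-symmetry iff, on x2 = F,
       D_t lambda + lambda^2 = F_x + lambda F_x1.
   By the quotient rule D_t lambda = (D_t N - lambda D_t Delta) / Delta, and
   expanding D_t N, D_t Delta one finds the key identity
       (D_t lambda + lambda^2) - (F_x + lambda F_x1) = (gamma2 - tau(F)) / Delta,
   where gamma2 - tau(F) is exactly the defect of the telescopic invariance. *)

Lemma deriv_eq (g : R -> R) (s l : R) : derivable_pt_lim g s l -> deriv g s = l.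
Proof.
  intros H. unfold deriv.
  apply (uniqueness_limite g s); [| exact H].
  exact (epsilon_spec (inhabits 0) (fun l => derivable_pt_lim g s l) (ex_intro _ l H)).
Qed.

Definition partials_at (f : fn3) (t x y lt lx ly : R) : Prop :=
  derivable_pt_lim (fun s => f s x y) t lt /\
  derivable_pt_lim (fun s => f t s y) x lx /\
  derivable_pt_lim (fun s => f t x s) y ly.

Definition has_Dt (f : fn3) (t x y z d : R) : Prop :=
  exists lt lx ly, partials_at f t x y lt lx ly /\ d = lt + y * lx + z * ly.

Lemma has_Dt_Dt (f : fn3) (t x y z d : R) : has_Dt f t x y z d -> Dt f t x y z = d.
Proof.
  intros (lt & lx & ly & (Ht & Hx & Hy) & ->).
  unfold Dt, pt, px, px1.
  rewrite (deriv_eq _ _ _ Ht), (deriv_eq _ _ _ Hx), (deriv_eq _ _ _ Hy).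
  reflexivity.
Qed.

Lemma has_partials_has_Dt (f : fn3) (t x y z : R) :
  has_partials f -> has_Dt f t x y z (Dt f t x y z).
Proof.
  intros Hp. destruct (Hp t x y) as [[lt Ht] [[lx Hx] [ly Hy]]].
  assert (Hf : has_Dt f t x y z (lt + y * lx + z * ly)).
  { exists lt, lx, ly. repeat split; assumption. }
  rewrite (has_Dt_Dt _ _ _ _ _ _ Hf). exact Hf.
Qed.

Lemma smooth3_has_partials (f : fn3) : smooth3 f -> has_partials f.
Proof. intros (S & Sf & HS). exact (proj1 (HS f Sf)). Qed.

Lemma has_Dt_coord (t x y z : R) : has_Dt (fun _ _ y => y) t x y z z.
Proof.
  exists 0, 0, 1. repeat split.
  - apply derivable_pt_lim_const.
  - apply derivable_pt_lim_const.
  - apply derivable_pt_lim_id.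
  - ring.
Qed.

Lemma has_Dt_minus (f g : fn3) (t x y z df dg : R) :
  has_Dt f t x y z df -> has_Dt g t x y z dg ->
  has_Dt (fun t x y => f t x y - g t x y) t x y z (df - dg).
Proof.
  intros (ft & fx & fy & (Ft & Fx & Fy) & ->) (gt & gx & gy & (Gt & Gx & Gy) & ->).
  exists (ft - gt), (fx - gx), (fy - gy). repeat split.
  - exact (derivable_pt_lim_minus _ _ _ _ _ Ft Gt).
  - exact (derivable_pt_lim_minus _ _ _ _ _ Fx Gx).
  - exact (derivable_pt_lim_minus _ _ _ _ _ Fy Gy).
  - ring.
Qed.

Lemma has_Dt_mult (f g : fn3) (t x y z df dg : R) :
  has_Dt f t x y z df -> has_Dt g t x y z dg ->
  has_Dt (fun t x y => f t x y * g t x y) t x y z (df * g t x y + f t x y * dg).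
Proof.
  intros (ft & fx & fy & (Ft & Fx & Fy) & ->) (gt & gx & gy & (Gt & Gx & Gy) & ->).
  exists (ft * g t x y + f t x y * gt), (fx * g t x y + f t x y * gx),
         (fy * g t x y + f t x y * gy). repeat split.
  - exact (derivable_pt_lim_mult _ _ _ _ _ Ft Gt).
  - exact (derivable_pt_lim_mult _ _ _ _ _ Fx Gx).
  - exact (derivable_pt_lim_mult _ _ _ _ _ Fy Gy).
  - ring.
Qed.

Lemma has_Dt_div (f g : fn3) (t x y z df dg : R) :
  has_Dt f t x y z df -> has_Dt g t x y z dg -> g t x y <> 0 ->
  has_Dt (fun t x y => f t x y / g t x y) t x y z
    ((df * g t x y - f t x y * dg) / (g t x y * g t x y)).
Proof.
  intros (ft & fx & fy & (Ft & Fx & Fy) & ->) (gt & gx & gy & (Gt & Gx & Gy) & ->) Hg.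
  exists ((ft * g t x y - gt * f t x y) / Rsqr (g t x y)),
         ((fx * g t x y - gx * f t x y) / Rsqr (g t x y)),
         ((fy * g t x y - gy * f t x y) / Rsqr (g t x y)). repeat split.
  - exact (derivable_pt_lim_div _ _ _ _ _ Ft Gt Hg).
  - exact (derivable_pt_lim_div _ _ _ _ _ Fx Gx Hg).
  - exact (derivable_pt_lim_div _ _ _ _ _ Fy Gy Hg).
  - unfold Rsqr. field. exact Hg.
Qed.

Lemma Dt_lambda (F alpha beta gamma1 : fn3) (t x y z : R) :
  has_partials F -> has_partials alpha -> has_partials beta -> has_partials gamma1 ->
  beta t x y - alpha t x y * y <> 0 ->
  Dt (fun t x y => (gamma1 t x y - alpha t x y * F t x y)
                   / (beta t x y - alpha t x y * y)) t x y z =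
  ((Dt gamma1 t x y z - (Dt alpha t x y z * F t x y + alpha t x y * Dt F t x y z))
     * (beta t x y - alpha t x y * y)
   - (gamma1 t x y - alpha t x y * F t x y)
     * (Dt beta t x y z - (Dt alpha t x y z * y + alpha t x y * z)))
  / ((beta t x y - alpha t x y * y) * (beta t x y - alpha t x y * y)).
Proof.
  intros pF pa pb pg Hn. apply has_Dt_Dt.
  apply has_Dt_div; [apply has_Dt_minus | apply has_Dt_minus | exact Hn].
  - apply has_partials_has_Dt, pg.
  - apply has_Dt_mult; apply has_partials_has_Dt; assumption.
  - apply has_partials_has_Dt, pb.
  - apply has_Dt_mult; [apply has_partials_has_Dt, pa | apply has_Dt_coord].
Qed.

Lemma Dt0_const (c : R) : Dt0 (fun _ _ => c) = fun _ _ _ => 0.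
Proof.
  assert (Hc : forall s, deriv (fun _ => c) s = 0).
  { intros s. apply deriv_eq, derivable_pt_lim_const. }
  do 3 (apply functional_extensionality; intro).
  unfold Dt0, pt, px. rewrite !Hc. ring.
Qed.

Lemma lam_phi1_dx (lam : fn3) : lam_phi1 lam (fun _ _ => 0) (fun _ _ => 1) = lam.
Proof.
  unfold lam_phi1. rewrite !Dt0_const.
  do 3 (apply functional_extensionality; intro). ring.
Qed.

Lemma dx_lambda_symmetry (F lam : fn3) :
  (forall t x y, Dt lam t x y (F t x y) + lam t x y * lam t x y
                 = px F t x y + lam t x y * px1 F t x y) ->
  lambda_symmetry F lam (fun _ _ => 0) (fun _ _ => 1).
Proof.
  intros H t x y.
  unfold lam_phi2, lift2, lift3. rewrite lam_phi1_dx, Dt0_const.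
  transitivity (Dt lam t x y (F t x y) + lam t x y * lam t x y); [ring |].
  rewrite H. ring.
Qed.

(* Key identity: with N = g - a f and Delta = b - a y, the lambda-symmetry defect
   of d_x equals the telescopic invariance defect divided by Delta; hence the
   invariance equation implies the lambda-symmetry equation.  Here a, b, g, f are
   the values of alpha, beta, gamma1, F, Da, Db, Dg the total derivatives of
   alpha, beta, gamma1 on x2 = f, and Ft + y Fx + f Fx1 is D_t F there. *)
Lemma invariance_implies_dx_equation (y a b g f Da Db Dg Ft Fx Fx1 : R) :
  b - a * y <> 0 ->
  Dg - Da * f + (g + y * Da - Db) / (b - y * a) * (g - a * f)
    = a * Ft + b * Fx + g * Fx1 ->
  ((Dg - (Da * f + a * (Ft + y * Fx + f * Fx1))) * (b - a * y)
     - (g - a * f) * (Db - (Da * y + a * f))) / ((b - a * y) * (b - a * y))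
  + (g - a * f) / (b - a * y) * ((g - a * f) / (b - a * y))
  = Fx + (g - a * f) / (b - a * y) * Fx1.
Proof.
  intros Hn Hinv.
  assert (Hn' : b - y * a <> 0) by (replace (b - y * a) with (b - a * y) by ring; exact Hn).
  apply Rminus_diag_uniq.
  match goal with |- ?lhs - ?rhs = 0 =>
    replace (lhs - rhs) with
      ((Dg - Da * f + (g + y * Da - Db) / (b - y * a) * (g - a * f)
        - (a * Ft + b * Fx + g * Fx1)) / (b - a * y)) by (field; auto)
  end.
  rewrite Hinv. unfold Rdiv. ring.
Qed.

Theorem corollary2p6 (F alpha beta gamma1 : fn3) :
  smooth3 F -> smooth3 alpha -> smooth3 beta -> smooth3 gamma1 ->
  (forall t x x1, beta t x x1 - alpha t x x1 * x1 <> 0) ->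
  telescopic_invariant F alpha beta gamma1 ->
  lambda_symmetry F
    (fun t x x1 => (gamma1 t x x1 - alpha t x x1 * F t x x1)
                   / (beta t x x1 - alpha t x x1 * x1))
    (fun _ _ => 0) (fun _ _ => 1).
Proof.
  intros sF sa sb sg Hn Hinv.
  apply dx_lambda_symmetry. intros t x y.
  rewrite Dt_lambda by (try apply smooth3_has_partials; auto).
  specialize (Hinv t x y).
  unfold telescopic_gamma2, lift3 in Hinv.
  apply invariance_implies_dx_equation; [apply Hn | exact Hinv].
Qed.
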